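(* Let $S$ be a list of sequences (indexed from $0$), and let $\rho(S[i],S[j])$ denote the length of the maximal common prefix of the sequences at indices $i$ and $j$. Define the overlap of $S[j]$ with respect to $S$ as $\mathcal{O}_S(j) := \max_{i<j} \rho(S[i],S[j])$ and the overlap of $S$ as $\mathcal{O}(S) := \sum_{j>0} \mathcal{O}_S(j)$. Let $L$ be the lexicographically ordered permutation of $S$. Then \[ \mathcal{O}(S) = \mathcal{O}(L) = \sum_{j>0} \rho(L[j-1],L[j]). \]
   Context: Setting: batch processing of shortest path queries in a road network. For each query, shortcut chains (sequences of vertices in a shortcut graph, oriented from the hub vertex to a query endpoint) are computed and then unpacked into paths; when unpacking a chain, the unpacked common prefix with a previously unpacked chain can be copied instead of recomputed. The overlap $\mathcal{O}(S)$ measures the amount of unpacking work saved for a given processing order of the list of chains $S$. *)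

From mathcomp Require Import all_boot all_order.
Set Implicit Arguments. Unset Strict Implicit. Unset Printing Implicit Defensive.
Import Order.TTheory.
Local Open Scope order_scope.

Fixpoint rho {T : eqType} (s t : seq T) : nat :=
  match s, t with
  | x :: s', y :: t' => if x == y then (rho s' t').+1 else 0%N
  | _, _ => 0%N
  end.

Fixpoint lexle {d : Order.disp_t} {T : orderType d} (s t : seq T) : bool :=
  match s, t with
  | [::], _ => true
  | _ :: _, [::] => false
  | x :: s', y :: t' => (x < y) || ((x == y) && lexle s' t')
  end.

Definition overlap_at {T : eqType} (S : seq (seq T)) (j : nat) : nat :=
  \max_(i < j) rho (nth [::] S i) (nth [::] S j).

Definition overlap {T : eqType} (S : seq (seq T)) : nat :=
  \sum_(1 <= j < size S) overlap_at S j.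

(* [rho] satisfies the ultrametric inequality min (rho a b) (rho b c) <= rho a c.
   Writing m z for the largest rho between z and the chains of a prefix A, two
   chains x, y processed right after A contribute m x + max (m y) (rho x y);
   by the ultrametric inequality this is symmetric in x and y, so the overlap is
   invariant under adjacent transpositions, hence under all permutations.  In a
   lexicographically sorted list, a <= b <= c implies rho a c <= rho b c, so the
   best earlier chain is always the immediate predecessor. *)

From mathcomp Require Import all_boot all_order zify.
Import Order.TTheory.

Lemma rhoC {T : eqType} (a b : seq T) : rho a b = rho b a.
Proof. by elim: a b => [|x a IH] [|y b] //=; rewrite eq_sym IH. Qed.

Lemma rho_ultrametric {T : eqType} (a b c : seq T) :
  minn (rho a b) (rho b c) <= rho a c.
Proof.
elim: a b c => [|x a IH] [|y b] [|z c] //=; rewrite ?minn0 ?min0n //.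
have [<-|_] := eqVneq x y; last by rewrite min0n.
have [_|_] := eqVneq x z; last by rewrite minn0.
by rewrite minnSS ltnS.
Qed.

Lemma lexle_refl {d} {T : orderType d} : reflexive (@lexle d T).
Proof. by elim=> [|x s IH] //=; rewrite eqxx IH orbT. Qed.

Lemma lexle_trans {d} {T : orderType d} : transitive (@lexle d T).
Proof.
move=> b a c; elim: a b c => [|x a IH] [|y b] [|z c] //=.
case/orP=> [lxy|/andP[/eqP-> ab]]; case/orP=> [lyz|/andP[/eqP<- bc]].
- by rewrite (lt_trans lxy lyz).
- by rewrite lxy.
- by rewrite lyz.
- by rewrite eqxx (IH _ _ ab bc) orbT.
Qed.

Lemma rho_lexle {d} {T : orderType d} (a b c : seq T) :
  lexle a b -> lexle b c -> rho a c <= rho b c.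
Proof.
elim: a b c => [|x a IH] [|y b] [|z c] //=.
case/orP=> [lxy|/andP[/eqP-> ab]]; case/orP=> [lyz|/andP[/eqP<- bc]].
- by rewrite (lt_eqF (lt_trans lxy lyz)).
- by rewrite (lt_eqF lxy).
- by rewrite (lt_eqF lyz).
- by rewrite eqxx ltnS IH.
Qed.

Definition overlap_with {T : eqType} (S : seq (seq T)) (x : seq T) : nat :=
  \max_(y <- S) rho y x.

Lemma overlap_with_rcons {T : eqType} (S : seq (seq T)) y x :
  overlap_with (rcons S y) x = maxn (overlap_with S x) (rho y x).
Proof. by rewrite /overlap_with -cats1 big_cat big_seq1. Qed.

Lemma overlap_with_ultrametric {T : eqType} (S : seq (seq T)) x y :
  minn (overlap_with S y) (rho y x) <= overlap_with S x.
Proof.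
rewrite /overlap_with; elim: S => [|z S IH]; first by rewrite !big_nil min0n.
by rewrite !big_cons; have := rho_ultrametric z y x; lia.
Qed.

Lemma overlap_rcons {T : eqType} (S : seq (seq T)) x :
  overlap (rcons S x) = overlap S + overlap_with S x.
Proof.
rewrite /overlap size_rcons.
have [S0|Sp] := posnP (size S).
  by rewrite (size0nil S0) /overlap_with big_nil !big_geq.
rewrite big_nat_recr //=; congr (_ + _).
  apply: eq_big_nat => j /andP[_ jS]; rewrite /overlap_at nth_rcons jS.
  by apply: eq_bigr => i _; rewrite nth_rcons (ltn_trans (ltn_ord i) jS).
rewrite /overlap_at /overlap_with nth_rcons ltnn eqxx (big_nth [::]) big_mkord.
by apply: eq_bigr => i _; rewrite nth_rcons ltn_ord.
Qed.

Lemma overlap_catr {T : eqType} (P Q B : seq (seq T)) :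
  perm_eq P Q -> overlap P = overlap Q -> overlap (P ++ B) = overlap (Q ++ B).
Proof.
move=> pPQ oPQ; elim/last_ind: B => [|B z IH]; first by rewrite !cats0.
rewrite -!rcons_cat !overlap_rcons IH; congr (_ + _).
by apply: perm_big; rewrite perm_cat2r.
Qed.

Lemma overlap_rcons2C {T : eqType} (A : seq (seq T)) x y :
  overlap (rcons (rcons A x) y) = overlap (rcons (rcons A y) x).
Proof.
have := overlap_with_ultrametric A x y; have := overlap_with_ultrametric A y x.
rewrite !overlap_rcons !overlap_with_rcons (rhoC y x); lia.
Qed.

Lemma overlap_move_last {T : eqType} (S1 S2 : seq (seq T)) x :
  overlap (S1 ++ x :: S2) = overlap (rcons (S1 ++ S2) x).
Proof.
elim: S2 S1 => [|y S2 IH] S1; first by rewrite cats1 cats0.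
have -> : S1 ++ [:: x, y & S2] = rcons (rcons S1 x) y ++ S2.
  by rewrite -!cats1 -!catA.
rewrite (@overlap_catr _ _ (rcons (rcons S1 y) x)); last exact: overlap_rcons2C.
  by rewrite cat_rcons IH cat_rcons.
by rewrite -!cats1 -!catA perm_cat2l perm_catC.
Qed.

Lemma perm_overlap {T : eqType} (L S : seq (seq T)) :
  perm_eq L S -> overlap L = overlap S.
Proof.
elim/last_ind: L S => [|L x IH] S pLS.
  by move: pLS; rewrite perm_sym => /perm_nilP ->.
have xS : x \in S by rewrite -(perm_mem pLS) mem_rcons mem_head.
case/splitPr: S / xS pLS => S1 S2 pLS.
have pL : perm_eq L (S1 ++ S2).
  rewrite -(perm_cons x) -(perm_rcons x) (perm_trans pLS) //.
  by rewrite -cat1s perm_catCA.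
rewrite overlap_move_last !overlap_rcons (IH _ pL); congr (_ + _).
exact: perm_big.
Qed.

Lemma sorted_overlap_at {d} {T : orderType d} (L : seq (seq T)) k :
  sorted lexle L -> k.+1 < size L ->
  overlap_at L k.+1 = rho (nth [::] L k) (nth [::] L k.+1).
Proof.
move=> sL kL.
have leL i j : i <= j <= k.+1 -> lexle (nth [::] L i) (nth [::] L j).
  case/andP=> ij jk; apply: (sorted_leq_nth lexle_trans lexle_refl [::] sL) => //.
    by rewrite inE (leq_ltn_trans (leq_trans ij jk)).
  by rewrite inE (leq_ltn_trans jk).
rewrite /overlap_at big_ord_recr /=; apply/maxn_idPr/bigmax_leqP => i _.
by apply: rho_lexle; apply: leL; rewrite leqnSn ?leqnn ?andbT // ltnW.
Qed.

Theorem theorem8p1 (d : Order.disp_t) (T : orderType d) (S L : seq (seq T)) :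
  perm_eq L S -> sorted lexle L ->
  overlap S = overlap L /\
  overlap L = (\sum_(1 <= j < size L) rho (nth [::] L j.-1) (nth [::] L j))%N.
Proof.
move=> pLS sL; split; first exact/esym/perm_overlap.
apply: eq_big_nat => -[//|k] /andP[_ kL].
exact: sorted_overlap_at.
Qed.
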